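(* Let $m\in\mathbb{N}$ and $s_1,\dots,s_m\ge1$. Then for every non-negative measurable function $f:H\times X\to[0,\infty)$ and every $\Delta\in X$, $$\int_{-1/3}^{1/3}f(a_{s_1+\cdots+s_m}u_r;\Delta)\,dr\le2\int f(a_{s_m}u_{r_m}\cdots a_{s_1}u_{r_1};\Delta)\,dm_I^{\otimes m}(r_1,\dots,r_m)$$ and $$\int f(a_{s_m}u_{r_m}\cdots a_{s_1}u_{r_1};\Delta)\,dm_I^{\otimes m}(r_1,\dots,r_m)\le\int_{-2}^{2}f(a_{s_1+\cdots+s_m}u_r;\Delta)\,dr.$$
   Context: $Q_0(v)=v_2^2-2v_1v_3$, $H=\{g\in\mathrm{SL}_3(\mathbb{R}):Q_0(gv)=Q_0(v)\ \forall v\}$, $X$ the space of unimodular lattices in $\mathbb{R}^3$. $a_t=\mathrm{diag}(e^t,1,e^{-t})$, $u_r=\begin{pmatrix}1&r&r^2/2\\0&1&r\\0&0&1\end{pmatrix}$. $m_I$ is the uniform Lebesgue probability measure on $I=[-1,1]$. *)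

From HB Require Import structures.
From mathcomp Require Import all_boot all_order all_algebra.
From mathcomp Require Import all_classical all_reals all_analysis.
Set Implicit Arguments. Unset Strict Implicit. Unset Printing Implicit Defensive.
Import Order.TTheory GRing.Theory Num.Theory.
Import numFieldNormedType.Exports.
Local Open Scope classical_set_scope.
Local Open Scope ring_scope.

Section Setup.
Variable R : realType.

(* Q_0(v) = v_2^2 - 2 v_1 v_3  (coordinates indexed 0,1,2 here) *)
Definition Q0 (v : 'cV[R]_3) : R := v 1 0 ^+ 2 - 2 * v 0 0 * v 2%:R 0.

Definition Hset : set 'M[R]_3 :=
  [set g | \det g = 1 /\ forall v : 'cV[R]_3, Q0 (g *m v) = Q0 v].

Definition a_ (t : R) : 'M[R]_3 :=
  \matrix_(i < 3, j < 3)
    (if (i : nat) == j then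
       (if (i : nat) == 0%N then expR t else if (i : nat) == 1%N then 1 else expR (- t))
     else 0).

Definition u_ (r : R) : 'M[R]_3 :=
  \matrix_(i < 3, j < 3)
    (if (j < i)%N then 0
     else if (i : nat) == j then 1
     else if ((j : nat) == (i : nat).+1)%N then r
     else r ^+ 2 / 2).

(* a_{s_m} u_{r_m} ... a_{s_1} u_{r_1}, with s_{i+1} = s i, r_{i+1} = tnth t i *)
Definition word (m : nat) (s : 'I_m -> R) (t : m.-tuple R) : 'M[R]_3 :=
  \prod_(i < m) (a_ (s (rev_ord i)) * u_ (tnth t (rev_ord i))).

(* Borel sigma-algebra on 3x3 real matrices (matrix topology = topology of R^9) *)
Definition Mat := g_sigma_algebraType (@open 'M[R]_3).

Definition latset (g : 'M[R]_3) : set 'cV[R]_3 :=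
  [set g *m map_mx (fun z : int => z%:~R) v | v in [set: 'cV[int]_3]].

Definition is_unimodular_lattice (L : set 'cV[R]_3) : Prop :=
  exists g : 'M[R]_3, \det g = 1 /\ L = latset g.

Definition Xlat := {L : set 'cV[R]_3 | is_unimodular_lattice L}.

Lemma Z3_unimodular : is_unimodular_lattice (latset 1%:M).
Proof. by exists 1%:M; rewrite det1. Qed.

HB.instance Definition _ := gen_eqMixin Xlat.
HB.instance Definition _ := gen_choiceMixin Xlat.
HB.instance Definition _ := isPointed.Build Xlat (exist _ _ Z3_unimodular).

(* Borel sigma-algebra of X = SL_3(R)/SL_3(Z): the quotient sigma-algebra,
   i.e. A is measurable iff its preimage in SL_3(R) is Borel. *)
Definition Xsigma : set (set Xlat) :=
  [set A | (measurable : set (set Mat))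
             [set g : Mat | \det g = 1 /\ exists2 L : Xlat, A L & sval L = latset g]].

Definition X := g_sigma_algebraType Xsigma.

Lemma lt_m1_1 : (-1 : R) < 1.
Proof. by rewrite (@lt_trans _ _ 0) ?ltrN10 ?ltr01. Qed.

Definition mI : set R -> \bar R := uniform_prob lt_m1_1.

Fixpoint mI_pow (n : nat) : set (n.-tuple R) -> \bar R :=
  match n as n0 return set (n0.-tuple R) -> \bar R with
  | 0%N => @dirac _ _ [tuple] R
  | n'.+1 => pushforward (product_measure1 mI (@mI_pow n'))
               (fun p : R * n'.-tuple R => [tuple of p.1 :: p.2])
  end.

Definition HX : set (Mat * X)%type := Hset `*` [set: X].

End Setup.
Arguments mI_pow R n : clear implicits.

From HB Require Import structures.
From mathcomp Require Import all_boot all_order all_algebra.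
From mathcomp Require Import all_classical all_reals all_analysis.
From mathcomp Require Import measurable_realfun ring lra.
Import Order.TTheory GRing.Theory Num.Theory.
Import numFieldNormedType.Exports.
Local Open Scope classical_set_scope.
Local Open Scope ring_scope.

(* Since u_r a_x = a_x u_(e^-x r), the word a_(s_m) u_(r_m) ... a_(s_1) u_(r_1)
   equals a_S u_psi with psi = r_1 + e^-s_1 r_2 + e^-(s_1+s_2) r_3 + ..., so
   with g r := f (a_S u_r, Delta) both sides are integrals of g, and the claim
   concerns the law of psi under m_I^m. Write psi = r_1 + z, where z = e^-s_1 psi'
   only depends on r_2, ..., r_m. As e^-s_i <= e^-1 <= 2/5, |psi'| <= 5/3 and
   |z| <= 2/3. Averaging over r_1 first gives (1/2) int_(z-1)^(z+1) g, which lies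
   between (1/2) int_(-1/3)^(1/3) g and (1/2) int_(-2)^2 g. *)

Section Horospherical.
Context {R : realType}.
Implicit Types (x y r : R).

Lemma aD x y : a_ (x + y) = a_ x * a_ y :> 'M[R]_3.
Proof.
apply/matrixP => i j; rewrite !mxE !big_ord_recl big_ord0 !mxE /=.
by case: i => [[|[|[|i]]] Hi] //=; case: j => [[|[|[|j]]] Hj] //=;
  rewrite ?opprD ?expRD; ring.
Qed.

Lemma uD x y : u_ (x + y) = u_ x * u_ y :> 'M[R]_3.
Proof.
apply/matrixP => i j; rewrite !mxE !big_ord_recl big_ord0 !mxE /=.
by case: i => [[|[|[|i]]] Hi] //=; case: j => [[|[|[|j]]] Hj] //=; field.
Qed.

Lemma a0 : a_ 0 = 1 :> 'M[R]_3.
Proof.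
apply/matrixP => i j; rewrite !mxE.
by case: i => [[|[|[|i]]] Hi] //=; case: j => [[|[|[|j]]] Hj] //=; rewrite ?oppr0 expR0.
Qed.

Lemma u0 : u_ 0 = 1 :> 'M[R]_3.
Proof.
apply/matrixP => i j; rewrite !mxE.
by case: i => [[|[|[|i]]] Hi] //=; case: j => [[|[|[|j]]] Hj] //=; rewrite expr0n mul0r.
Qed.

Lemma u_a_comm r x : u_ r * a_ x = a_ x * u_ (expR (- x) * r) :> 'M[R]_3.
Proof.
have ex : expR x != 0 by rewrite gt_eqF ?expR_gt0.
apply/matrixP => i j; rewrite !mxE !big_ord_recl !big_ord0 !mxE /= expRN.
by case: i => [[|[|[|i]]] Hi] //=; case: j => [[|[|[|j]]] Hj] //=; field.
Qed.

Fixpoint ucoord {n} : ('I_n -> R) -> n.-tuple R -> R :=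
  if n is n'.+1 then fun s t =>
    thead t + expR (- s ord0) * ucoord (fun i => s (lift ord0 i)) [tuple of behead t]
  else fun _ _ => 0.

Lemma wordS n (s : 'I_n.+1 -> R) (t : n.+1.-tuple R) :
  word s t = word (fun i => s (lift ord0 i)) [tuple of behead t] * (a_ (s ord0) * u_ (thead t)).
Proof.
rewrite /word big_ord_recr /=.
have -> : rev_ord (@ord_max n) = ord0 by apply: val_inj; rewrite /= subnn.
congr (_ * _).
apply: eq_bigr => i _; rewrite tnth_behead.
have -> : rev_ord (widen_ord (leqnSn n) i) = lift ord0 (rev_ord i).
  by apply: val_inj; rewrite /= /bump /= add1n subnSK.
congr (_ * u_ (tnth t _)); apply: val_inj.
by rewrite /= inordK; [exact: add1n | exact: ltn_ord (rev_ord i)].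
Qed.

Lemma wordE n (s : 'I_n -> R) (t : n.-tuple R) :
  word s t = a_ (\sum_(i < n) s i) * u_ (ucoord s t).
Proof.
elim: n s t => [|n IH] s t; first by rewrite /word !big_ord0 a0 u0 mulr1.
rewrite wordS IH big_ord_recl /= mulrA -(mulrA (a_ _)) u_a_comm mulrA -aD -mulrA -uD.
by rewrite addrC [thead t + _]addrC.
Qed.

Lemma det_a x : \det (a_ x) = 1.
Proof.
rewrite det_trig; last first.
  apply/forallP => i; apply/forallP => j; apply/implyP.
  by case: i => [[|[|[|i]]] Hi]; case: j => [[|[|[|j]]] Hj]; rewrite // !mxE.
by rewrite !big_ord_recl big_ord0 !mxE /= mulr1 mul1r -expRD subrr expR0.
Qed.

Lemma det_u r : \det (u_ r) = 1.
Proof.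
rewrite -det_tr det_trig; last first.
  apply/forallP => i; apply/forallP => j; apply/implyP.
  by case: i => [[|[|[|i]]] Hi]; case: j => [[|[|[|j]]] Hj]; rewrite // !mxE.
by rewrite !big_ord_recl big_ord0 !mxE /= !mulr1.
Qed.

Lemma Hset_au x r : Hset (a_ x * u_ r).
Proof.
split=> [|v]; first by rewrite det_mulmx det_a det_u mulr1.
have ex : expR x != 0 by rewrite gt_eqF ?expR_gt0.
rewrite /Q0 !mxE !big_ord_recl !big_ord0 !mxE /= !big_ord_recl !big_ord0 !mxE /=.
have E0 : (0 : 'I_3) = ord0 by apply: val_inj.
have E1 : (1 : 'I_3) = lift ord0 ord0 by apply: val_inj.
have E2 : (2%:R : 'I_3) = lift ord0 (lift ord0 ord0) by apply: val_inj.
by rewrite expRN E2 E1 E0; field.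
Qed.

End Horospherical.

Section Borel.
Context {R : realType}.

Lemma continuous_mx (T : topologicalType) m n (F : T -> 'M[R]_(m, n)) :
  (forall i j, continuous (fun x => F x i j)) -> continuous F.
Proof.
move=> cF; rewrite (_ : F = fun x => \sum_i \sum_j F x i j *: delta_mx i j); last first.
  by apply/funext => x; exact: matrix_sum_delta.
apply: (continuous_big add_continuous) => i _.
apply: (continuous_big add_continuous) => j _ x.
by apply: continuousZr_tmp; exact: cF.
Qed.

Lemma continuous_mulmxr {m n p} (B : 'M[R]_(n, p)) :
  continuous (fun A : 'M[R]_(m, n) => A *m B).
Proof.
apply: continuous_mx => i j; under eq_fun do rewrite mxE.
(* At [R^o] the codomain topology is the one [continuousM] produces. *)
apply: (continuous_big (@add_continuous R^o)) => k _ A.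
by apply: continuousM; [exact: coord_continuous | exact: cst_continuous].
Qed.

Lemma continuous_mulmxl {m n p} (A : 'M[R]_(m, n)) :
  continuous (fun B : 'M[R]_(n, p) => A *m B).
Proof.
apply: continuous_mx => i j; under eq_fun do rewrite mxE.
apply: (continuous_big (@add_continuous R^o)) => k _ B.
by apply: (@continuousM _ _ (fun=> _)); [exact: cst_continuous | exact: coord_continuous].
Qed.

Lemma continuous_det n : continuous (fun A : 'M[R]_n => \det A).
Proof.
apply: (continuous_big (@add_continuous R^o)) => s _ A.
apply: (@continuousM _ _ (fun=> _)); first exact: cst_continuous.
by apply: (continuous_big mul_continuous) => i _; exact: coord_continuous.
Qed.

Lemma continuous_Q0 : continuous (@Q0 R).
Proof.
move=> v; apply: (@continuousB _ R^o _ (fun w => _) (fun w => _)).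
  by apply: (@continuousM _ _ (fun w => _)); exact: coord_continuous.
apply: (@continuousM _ _ (fun w => _)); last exact: coord_continuous.
by apply: (@continuousM _ _ (fun=> _)); [exact: cst_continuous | exact: coord_continuous].
Qed.

Lemma closed_Hset : closed (@Hset R).
Proof.
have -> : @Hset R = (fun A => \det A) @^-1` [set 1] `&`
    \bigcap_v ((fun A => Q0 (A *m v)) @^-1` [set Q0 v]).
  apply/seteqP; split=> A [detA QA]; split=> // v; first by move=> _; exact: QA.
  exact: QA v I.
apply: closedI.
  by apply: preimage_closed; [move=> A _; exact: continuous_det | exact: closed_eq].
apply: closed_bigI => v _; apply: preimage_closed; last exact: closed_eq.
by move=> A _; exact: continuous_comp (continuous_mulmxr v A) (continuous_Q0 _).
Qed.

Lemma continuous_u : continuous (@u_ R).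
Proof.
apply: continuous_mx => -[[|[|[|i]]] Hi] // -[[|[|[|j]]] Hj] //.
all: under eq_fun do rewrite mxE /=.
all: try by [exact: cst_continuous | move=> r].
move=> r; exact: continuousM (@exprn_continuous R 2 r) (@cst_continuous _ _ _ r).
Qed.

Lemma measurable_Hset : measurable (@Hset R : set (Mat R)).
Proof.
rewrite -(setCK (@Hset R)); apply: measurableC; apply: sub_sigma_algebra.
exact: closed_openC closed_Hset.
Qed.

Lemma measurable_fun_Mat (phi : R -> 'M[R]_3) :
  continuous phi -> measurable_fun setT (phi : R -> Mat R).
Proof.
move=> cphi; apply: (@measurability _ _ R (Mat R) setT _ (@open 'M[R]_3)) => //.
move=> _ [B oB <-]; rewrite setTI; apply: open_measurable.
exact: open_comp.
Qed.

Lemma measurable_fun_au_section (f : Mat R * X R -> R) S (D : X R) :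
  measurable_fun (@HX R) f -> measurable_fun setT (fun r => f (a_ S * u_ r, D)).
Proof.
move=> mf; apply: (measurable_comp (F := @HX R)) => //.
- exact: measurableX measurable_Hset measurableT.
- by move=> _ [r _ <-]; split=> //; exact: Hset_au.
apply: measurable_fun_pair (measurable_cst D).
apply: measurable_fun_Mat => r.
exact: continuous_comp (continuous_u r) (continuous_mulmxl (a_ S) _).
Qed.

End Borel.

Section Uniform.
Context {R : realType}.
Local Open Scope ereal_scope.
Local Notation mu := (@lebesgue_measure R).

(* [mI] is [uniform_prob] on [measurableTypeR R] but is typed over the
   canonical measurable structure of [R] (same sets, another display). *)
HB.instance Definition _ := isMeasure.Build _ R R (@mI R)
  (measure0 (uniform_prob (@lt_m1_1 R))) (measure_ge0 (uniform_prob (@lt_m1_1 R)))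
  (@measure_semi_sigma_additive _ _ _ (uniform_prob (@lt_m1_1 R))).
HB.instance Definition _ := Measure_isProbability.Build _ R R (@mI R)
  (probability_setT (uniform_prob (@lt_m1_1 R))).

Lemma lebesgue_measure_shift (z : R) (A : set R) : measurable A ->
  pushforward mu ((+%R^~ z) : _ -> measurableTypeR R) A = mu A.
Proof.
move=> mA; apply/esym/lebesgue_measure_unique => //.
  by apply: measurable_funD; [exact: measurable_id | exact: measurable_cst].
move=> mshift _ [[a b] _ <-] /=; rewrite /pushforward.
rewrite (_ : _ @^-1` _ = `](a - z)%R, (b - z)%R]%classic); last first.
  by apply/seteqP; split => x /=; rewrite !in_itv /= ltrBlDr lerBrDr.
rewrite !lebesgue_measure_itv /= !lte_fin ltrD2r -!EFinD.
by congr (if _ then _%:E else _); rewrite opprB addrA subrK.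
Qed.

Lemma ge0_integral_shift (F : R -> \bar R) (z a b : R) :
  measurable_fun setT F -> (forall x, 0 <= F x) ->
  \int[mu]_(x in `[a, b]) F (x + z)%R = \int[mu]_(x in `[(a + z)%R, (b + z)%R]) F x.
Proof.
move=> mF F0; pose shift : measurableTypeR R -> measurableTypeR R := +%R^~ z.
have mshift : measurable_fun setT shift.
  by apply: measurable_funD; [exact: measurable_id | exact: measurable_cst].
transitivity (\int[pushforward mu shift]_(x in `[(a + z)%R, (b + z)%R]) F x); last first.
  by apply: eq_measure_integral => A mA _; exact: lebesgue_measure_shift.
rewrite (ge0_integral_pushforward mshift) //; last exact: measurable_funTS.
by congr integral; apply/seteqP; split => x /=; rewrite !in_itv /= !lerD2r.
Qed.

Lemma integral_mI (F : R -> \bar R) : measurable_fun setT F -> (forall x, 0 <= F x) ->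
  \int[@mI R]_x F x = 2^-1%:E * \int[mu]_(x in `[(-1)%R, 1%R]) F x.
Proof.
move=> mF F0; have mid : measurable_fun setT (id : measurableTypeR R -> R).
  by move=> _ A mA; rewrite setTI.
have := ge0_integral_pushforward mid (uniform_prob (@lt_m1_1 R)) measurableT mF.
by rewrite preimage_setT => -> //; rewrite integral_uniform // opprK.
Qed.

End Uniform.

Section Average.
Context {R : realType}.
Local Open Scope ereal_scope.
Local Notation mu := (@lebesgue_measure R).

Definition mI_avg (F : R -> \bar R) (z : R) : \bar R := \int[@mI R]_x F (x + z)%R.

Section NonnegIntegrand.
Variable F : R -> \bar R.
Hypotheses (mF : measurable_fun setT F) (F0 : forall x, 0 <= F x).

Lemma measurable_mI_avg : measurable_fun setT (mI_avg F).
Proof.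
have mFD : measurable_fun setT (fun p : R * R => F (p.1 + p.2)%R).
  by apply: measurableT_comp => //; exact: measurable_funD.
exact: (measurable_fun_fubini_tonelli_G (m1 := @mI R) _ mFD (fun p => F0 _)).
Qed.

Lemma mI_avgE z :
  mI_avg F z = 2^-1%:E * \int[mu]_(x in `[(z - 1)%R, (z + 1)%R]) F x.
Proof.
rewrite /mI_avg integral_mI //; last first.
  by apply: measurableT_comp => //; apply: measurable_funD => //; exact: measurable_cst.
by rewrite ge0_integral_shift // addrC [(1 + z)%R]addrC.
Qed.

Lemma mI_avg_bounds (A B : \bar R) z : 0 <= A ->
  (forall x, (z - 1 <= x <= z + 1)%R -> A <= F x <= B) -> A <= mI_avg F z <= B.
Proof.
move=> A0 FAB; rewrite mI_avgE.
have cstE K : \int[mu]_(x in `[(z - 1)%R, (z + 1)%R]) cst K x = K * 2%:E.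
  rewrite integral_cst //= lebesgue_measure_itv /= lte_fin ifT -?EFinD; last by lra.
  by congr (_ * _%:E); lra.
have avg_cst (K : \bar R) : 2^-1%:E * (K * 2%:E) = K.
  by rewrite muleCA -EFinM mulVf ?pnatr_eq0 // mule1.
have mFI : measurable_fun `[(z - 1)%R, (z + 1)%R] F := measurable_funTS mF.
apply/andP; split.
  rewrite -{1}(avg_cst A) -cstE; apply: lee_wpmul2l; first by rewrite lee_fin.
  apply: ge0_le_integral => //= x.
  by rewrite in_itv => /FAB /andP[].
rewrite -[X in _ <= X](avg_cst B) -cstE; apply: lee_wpmul2l; first by rewrite lee_fin.
apply: ge0_le_integral => //= x.
by rewrite in_itv => /FAB /andP[].
Qed.

End NonnegIntegrand.
End Average.

Section Product.
Context {R : realType}.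
Local Open Scope ereal_scope.

Definition tuple_cons {n} (p : R * n.-tuple R) : n.+1.-tuple R := [tuple of p.1 :: p.2].

Lemma measurable_tuple_cons n : measurable_fun setT (@tuple_cons n).
Proof. exact: measurable_cons measurable_fst measurable_snd. Qed.

HB.instance Definition _ n :=
  isMeasurableFun.Build _ _ _ _ (@tuple_cons n) (@measurable_tuple_cons n).

Fixpoint mI_pow_prob n : probability (n.-tuple R) R :=
  if n is n'.+1 then distribution (@mI R \x mI_pow_prob n') (@tuple_cons n')
  else [the probability _ _ of dirac [tuple]].

Lemma mI_powE n : mI_pow R n = mI_pow_prob n.
Proof. by elim: n => //= n ->. Qed.

Lemma ucoord_cons n (s : 'I_n.+1 -> R) (p : R * n.-tuple R) :
  ucoord s (tuple_cons p) = (p.1 + expR (- s ord0) * ucoord (fun i => s (lift ord0 i)) p.2)%R.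
Proof. by case: p => x t; congr (_ + _ * ucoord _ _)%R; exact: val_inj. Qed.

Lemma measurable_ucoord n (s : 'I_n -> R) : measurable_fun setT (ucoord s).
Proof.
elim: n s => [|n IH] s /=; first exact: measurable_cst.
apply: measurable_funD; first exact: measurable_tnth.
apply: measurable_funM; first exact: measurable_cst.
exact: measurableT_comp (IH _) (@measurable_behead _ R n).
Qed.

Lemma ge0_integral_ucoordS n (s : 'I_n.+1 -> R) (F : R -> \bar R) :
  measurable_fun setT F -> (forall x, 0 <= F x) ->
  \int[mI_pow_prob n.+1]_t F (ucoord s t) =
  \int[mI_pow_prob n]_t mI_avg F (expR (- s ord0) * ucoord (fun i => s (lift ord0 i)) t)%R.
Proof.
move=> mF F0; set s' := fun i : 'I_n => s (lift ord0 i).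
rewrite /= ge0_integral_distribution //; last first.
  by apply: measurableT_comp => //; exact: measurable_ucoord.
transitivity (\int[@mI R \x mI_pow_prob n]_p F (p.1 + expR (- s ord0) * ucoord s' p.2)%R).
  by apply: eq_integral => p _; exact (congr1 F (ucoord_cons n s p)).
apply: fubini_tonelli2 => //; apply: measurableT_comp => //.
apply: measurable_funD => //; apply: measurable_funM; first exact: measurable_cst.
by apply: measurableT_comp => //; exact: measurable_ucoord.
Qed.

End Product.

Section Sandwich.
Context {R : realType}.

Lemma expR1_ge : 5 / 2 <= expR (1 : R).
Proof.
have h : 1 + 1 / 6 <= expR (1 / 6 : R) := expR_ge1Dx _.
have -> : (1 : R) = 6%:R * (1 / 6) by rewrite mul1r divff // pnatr_eq0.
rewrite expRM_natl; apply: (@le_trans _ _ ((1 + 1 / 6) ^+ 6)).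
  by rewrite !exprS expr0; lra.
by apply: lerXn2r => //; rewrite ?nnegrE //; lra.
Qed.

Lemma expRN_contract (x y : R) : 1 <= x -> `|y| <= 5 / 3 -> `|expR (- x) * y| <= 2 / 3.
Proof.
move=> x1 y53; have e0 := expR_gt0 (- x).
have e25 : expR (- x) <= 2 / 5.
  have eK : expR (-1) * expR 1 = 1 :> R by rewrite -expRD addNr expR0.
  have := expR1_ge; have := expR_gt0 (-1 : R).
  have : expR (- x) <= expR (-1) by rewrite ler_expR lerN2.
  nra.
rewrite normrM gtr0_norm //; have := normr_ge0 y; nra.
Qed.

Local Open Scope ereal_scope.
Local Notation mu := (@lebesgue_measure R).

(* On the support [-1, 1]^n, |ucoord s t| <= 1 + 2/5 + (2/5)^2 + ... = 5/3. *)
Lemma ucoord_integral_bounds n (s : 'I_n -> R) (F : R -> \bar R) (A B : \bar R) :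
  (forall i, (1 <= s i)%R) -> measurable_fun setT F -> (forall y, 0 <= F y) -> 0 <= A ->
  (forall y, (`|y| <= 5 / 3)%R -> A <= F y <= B) ->
  A <= \int[mI_pow_prob n]_t F (ucoord s t) <= B.
Proof.
elim: n s F => [|n IH] s F s1 mF F0 A0 FAB.
  by rewrite /= integral_dirac // diracE in_setT mul1e; apply: FAB; rewrite normr0.
rewrite ge0_integral_ucoordS //.
apply: (IH _ (fun y => mI_avg F (expR (- s ord0) * y))) => //.
- apply: measurableT_comp; first exact: measurable_mI_avg.
  by apply: measurable_funM; [exact: measurable_cst | exact: measurable_id].
- by move=> y; apply: integral_ge0 => x _; exact: F0.
move=> y /(expRN_contract _ _ (s1 ord0)); rewrite ler_norml => /andP[z1 z2].
apply: mI_avg_bounds => // x /andP[x1 x2]; apply: FAB.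
by rewrite ler_norml; apply/andP; split; lra.
Qed.

Lemma ucoord_integral_sandwich n (s : 'I_n.+1 -> R) (g : R -> \bar R) :
  (forall i, (1 <= s i)%R) -> measurable_fun setT g -> (forall r, 0 <= g r) ->
  \int[mu]_(r in `[(- (1 / 3))%R, (1 / 3)%R]) g r
    <= 2%:E * \int[mI_pow_prob n.+1]_t g (ucoord s t) /\
  \int[mI_pow_prob n.+1]_t g (ucoord s t) <= \int[mu]_(r in `[(-2)%R, 2%R]) g r.
Proof.
move=> s1 mg g0; rewrite ge0_integral_ucoordS //.
have g_mono (a b c d : R) : (c <= a)%R -> (b <= d)%R ->
    \int[mu]_(r in `[a, b]) g r <= \int[mu]_(r in `[c, d]) g r.
  move=> ca bd; apply: ge0_subset_integral => //; first exact: measurable_funTS.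
  by move=> r /=; rewrite !in_itv /= => /andP[ar rb]; apply/andP; split; lra.
set L := \int[mu]_(r in `[(- (1 / 3))%R, (1 / 3)%R]) g r.
set U := \int[mu]_(r in `[(-2)%R, 2%R]) g r.
have /andP[lower upper] : 2^-1%:E * L <= \int[mI_pow_prob n]_t
    mI_avg g (expR (- s ord0) * ucoord (fun i => s (lift ord0 i)) t) <= 2^-1%:E * U.
  apply: (ucoord_integral_bounds _ _ (fun y => mI_avg g (expR (- s ord0) * y))) => //.
  - apply: measurableT_comp; first exact: measurable_mI_avg.
    by apply: measurable_funM; [exact: measurable_cst | exact: measurable_id].
  - by move=> y; apply: integral_ge0 => x _; exact: g0.
  - by apply: mule_ge0; [rewrite lee_fin | apply: integral_ge0].
  move=> y /(expRN_contract _ _ (s1 ord0)); rewrite ler_norml => /andP[z1 z2].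
  rewrite mI_avgE //; apply/andP; split; apply: lee_wpmul2l; rewrite ?lee_fin //;
    apply: g_mono; lra.
split.
  have -> : L = 2%:E * (2^-1%:E * L) by rewrite muleA -EFinM divff ?pnatr_eq0 // mul1e.
  by apply: lee_wpmul2l; rewrite ?lee_fin.
apply: (le_trans upper); rewrite -[X in _ <= X]mul1e.
by apply: lee_wpmul2r; [exact: integral_ge0 | rewrite lee_fin invf_le1 ?ler1n].
Qed.

End Sandwich.

Theorem lemma6p1 (R : realType) (m : nat) (s : 'I_m -> R) :
  (0 < m)%N ->
  (forall i, 1 <= s i) ->
  forall (f : (Mat R * X R)%type -> R),
    measurable_fun (@HX R) f ->
    (forall p, (@HX R) p -> 0 <= f p) ->
    forall Delta : X R,
      let S := \sum_(i < m) s i in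
      ((\int[@lebesgue_measure R]_(r in [set r : R | (- (1/3) <= r <= 1/3)%R])
          (f ((a_ S * u_ r)%R, Delta))%:E)
       <= 2%:E * \int[mI_pow R m]_(t in [set: m.-tuple R])
                   (f (word s t, Delta))%:E)%E /\
      ((\int[mI_pow R m]_(t in [set: m.-tuple R]) (f (word s t, Delta))%:E)
       <= \int[@lebesgue_measure R]_(r in [set r : R | (-2 <= r <= 2)%R])
            (f ((a_ S * u_ r)%R, Delta))%:E)%E.
Proof.
case: m s => [//|n] s _ s1 f mf f0 Delta S.
rewrite -!set_itvcc mI_powE.
have -> : (\int[mI_pow_prob n.+1]_t (f (word s t, Delta))%:E =
    \int[mI_pow_prob n.+1]_t (f (a_ S * u_ (ucoord s t), Delta))%:E)%E.
  by apply: eq_integral => t _; rewrite wordE.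
apply: ucoord_integral_sandwich => //.
  by apply/measurable_EFinP; exact: measurable_fun_au_section _ _ _ mf.
by move=> r; rewrite lee_fin; apply: f0; split=> //; exact: Hset_au.
Qed.
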